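(* Let $q$ be a prime power, $1\le k$, $d\ge1$, $k+d<n\le m$, let $g_1,\dots,g_n\in\mathbb{F}_{q^m}$ be linearly independent over $\mathbb{F}_q$, and let $\mathcal{G}$ be the Gabidulin code of dimension $k$ with respect to $g_1,\dots,g_n$. Let $$f(x)=x^{q^{k+d}}-a_1x^{q^{k+d-1}}+a_2x^{q^{k+d-2}}-\cdots+(-1)^da_dx^{q^k}+\sum_{i=0}^{k-1}c_ix^{q^i}$$ with $a_j,c_i\in\mathbb{F}_{q^m}$, and $\sigma_f=(f(g_1),\dots,f(g_n))$. Then $d_R(\sigma_f,\mathcal{G})=n-(k+d)$ if and only if there exist $\mathbb{F}_q$-linearly independent $\beta_1,\dots,\beta_{k+d}\in\langle g_1,\dots,g_n\rangle$ such that for all $1\le i\le d$, $$a_i=\frac{\det\mathcal{R}_{k+d-i}(\beta_1,\dots,\beta_{k+d})}{\det M_{k+d}(\beta_1,\dots,\beta_{k+d})}.$$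
   Context: For $\beta_1,\dots,\beta_s\in\mathbb{F}_{q^m}$, the $t\times s$ Moore matrix $M_t(\beta_1,\dots,\beta_s)$ has $(i,j)$ entry $\beta_j^{q^{i-1}}$, $1\le i\le t$. For $0\le j\le s$, $\mathcal{R}_j(\beta_1,\dots,\beta_s)$ denotes the $s\times s$ matrix obtained from $M_{s+1}(\beta_1,\dots,\beta_s)$ by deleting the row $(\beta_1^{q^j},\dots,\beta_s^{q^j})$. $\mathcal{L}_q(x,\mathbb{F}_{q^m})$ is the set of $q$-linearized polynomials $\sum_i a_ix^{q^i}$ over $\mathbb{F}_{q^m}$, $q$-degree being the largest $i$ with $a_i\ne0$. Rank distance: $d_R(\mathbf{u},\mathbf{v})=\dim_{\mathbb{F}_q}\langle u_1-v_1,\dots,u_n-v_n\rangle$, $d_R(\mathbf{u},C)=\min_{\mathbf{c}\in C}d_R(\mathbf{u},\mathbf{c})$. The Gabidulin code of dimension $k$ is $\mathcal{G}=\{(v(g_1),\dots,v(g_n)) : v\in\mathcal{L}_q(x,\mathbb{F}_{q^m}),\ v=0\text{ or }\deg_q(v)<k\}$. *)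

(* F_q = K (a finite field, q := #|K|), F_{q^m} = L, a finite
   field extension of K with m := \dim {:L} (its dimension over K). *)
From HB Require Import structures.
From mathcomp Require Import all_boot all_order all_algebra all_field.
Set Implicit Arguments. Unset Strict Implicit. Unset Printing Implicit Defensive.
Import GRing.Theory.
Local Open Scope ring_scope.

Definition rkv (K : fieldType) (L : fieldExtType K) (n : nat) (u : 'I_n -> L) : nat :=
  \dim <<[seq u i | i : 'I_n]>>%VS.

Definition dR (K : fieldType) (L : fieldExtType K) (n : nat) (u v : 'I_n -> L) : nat :=
  rkv (fun i => u i - v i).

Definition dR_code_is (K : fieldType) (L : fieldExtType K) (n : nat)
  (u : 'I_n -> L) (C : ('I_n -> L) -> Prop) (r : nat) : Prop :=
  (exists2 c, C c & dR u c = r) /\ (forall c, C c -> (r <= dR u c)%N).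

(* Gabidulin code of dimension k w.r.t. g: evaluations of q-linearized
   polynomials v(x) = sum_{j<k} v_j x^{q^j} (i.e. v = 0 or deg_q v < k) *)
Definition gabidulin (K : finFieldType) (L : fieldExtType K) (n : nat)
  (g : 'I_n -> L) (k : nat) (c : 'I_n -> L) : Prop :=
  exists v : 'I_k -> L, forall i, c i = \sum_(j < k) v j * g i ^+ (#|K| ^ j)%N.

Definition moore (K : finFieldType) (L : fieldExtType K) (t s : nat)
  (b : 'I_s -> L) : 'M[L]_(t, s) :=
  \matrix_(i < t, j < s) b j ^+ (#|K| ^ i)%N.

(* R_j(b_1..b_s): M_{s+1}(b) with the row (b^{q^j}) deleted (0 <= j <= s) *)
Definition Rdel (K : finFieldType) (L : fieldExtType K) (s : nat) (j : nat)
  (b : 'I_s -> L) : 'M[L]_s :=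
  \matrix_(i < s, l < s) b l ^+ (#|K| ^ bump j i)%N.

(* f(x) = x^{q^{k+d}} + sum_{j=1}^d (-1)^j a_j x^{q^{k+d-j}} + sum_{i<k} c_i x^{q^i},
   with a_j stored as a (j-1) *)
Definition fpoly (K : finFieldType) (L : fieldExtType K) (k d : nat)
  (a : 'I_d -> L) (c : 'I_k -> L) (x : L) : L :=
  x ^+ (#|K| ^ (k + d))%N
  + \sum_(j < d) (-1) ^+ j.+1 * a j * x ^+ (#|K| ^ (k + d - j.+1))%N
  + \sum_(i < k) c i * x ^+ (#|K| ^ i)%N.

(** A q-linearized polynomial is F_q-linear, and a nonzero one of q-degree s
    has at most q^s roots, so its kernel has F_q-dimension at most s.  Hence,
    for every codeword, [σ_f - c] is the evaluation on [g] of a monic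
    linearized polynomial of q-degree [k + d], whose kernel meets
    [<g_1, ..., g_n>] in dimension at most [k + d]; by rank-nullity its rank
    distance is at least [n - (k + d)], with equality exactly when that kernel
    contains [k + d] independent [β_i] of [<g>].  A monic linearized
    polynomial of q-degree [s] vanishing on [s] independent [β_i] is unique,
    namely [det M_{s+1}(β_1, ..., β_s, x) / det M_s(β)], whose coefficients
    come from the Laplace expansion along the last row; comparing them with
    those of [f] gives the formula for [a_i], while the [c_i] can always be
    matched by choosing the codeword. *)
From HB Require Import structures.
From mathcomp Require Import all_boot all_order all_algebra all_field fingroup pgroup abelian.
From mathcomp Require Import zify.
Set Implicit Arguments. Unset Strict Implicit. Unset Printing Implicit Defensive.
Import GRing.Theory.
Local Open Scope ring_scope.

Lemma free_size_leq_dim (K : fieldType) (vT : vectType K) (X : seq vT) (U : {vspace vT}) :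
  free X -> {subset X <= U} -> (size X <= \dim U)%N.
Proof. by move=> /eqP <- /span_subvP /dimvS. Qed.

Lemma dim_lker_ge_free (K : fieldType) (vT wT : vectType K) (f : 'Hom(vT, wT))
    t (b : 'I_t -> vT) :
  free [seq b i | i : 'I_t] -> (forall i, f (b i) = 0) -> (t <= \dim (lker f))%N.
Proof.
move=> free_b fb0; rewrite -[t]card_ord -(size_image b).
by apply: free_size_leq_dim => // _ /imageP [i _ ->]; rewrite memv_ker fb0.
Qed.

Section RankDistance.

Variables (K : fieldType) (L : fieldExtType K).

Lemma eq_rkv n (u u' : 'I_n -> L) : u =1 u' -> rkv u = rkv u'.
Proof. by move=> eq_u; rewrite /rkv /image_mem (eq_map eq_u). Qed.

Lemma rkv_lfun_ker n (f : 'End(L)) (g : 'I_n -> L) :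
  free [seq g i | i : 'I_n] ->
  (rkv (fun i => f (g i)) + \dim (<<[seq g i | i : 'I_n]>> :&: lker f) = n)%N.
Proof.
move=> free_g; rewrite /rkv addnC /image_mem (map_comp f g) -limg_span limg_ker_dim.
by rewrite (eqP free_g) size_image card_ord.
Qed.

End RankDistance.

Section Linearized.

Variables (K : finFieldType) (L : fieldExtType K).
Local Notation q := #|K|.

Lemma frobeniusD j (x y : L) : (x + y) ^+ (q ^ j) = x ^+ (q ^ j) + y ^+ (q ^ j).
Proof.
have [p pr_p pK] := finPcharP K.
apply: exprDn_pchar.
have pL : [pchar L] =i (p : nat_pred).
  by move=> r; rewrite (pchar_lalg L) (pcharf_eq pK).
rewrite (eq_pnat _ pL) pnatX.
have := abelem_pgroup (fin_ring_pchar_abelem pK).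
by rewrite /pgroup cardsT => ->.
Qed.

Lemma frobeniusZ j (c : K) (x : L) : (c *: x) ^+ (q ^ j) = c *: x ^+ (q ^ j).
Proof.
rewrite exprZn; congr (_ *: _).
by elim: j => [|j IH]; rewrite ?expr1 // expnS exprM expf_card.
Qed.

Definition lin_eval s (w : 'I_s -> L) (x : L) : L := \sum_(i < s) w i * x ^+ (q ^ i).

Definition monic_lin s (w : 'I_s -> L) (x : L) : L := x ^+ (q ^ s) + lin_eval w x.

Definition lin_poly s (w : 'I_s -> L) : {poly L} := \sum_(i < s) w i *: 'X^(q ^ i).

Lemma lin_eval_is_linear s (w : 'I_s -> L) : linear (lin_eval w).
Proof.
move=> c x y; rewrite /lin_eval scaler_sumr -big_split /=.
by apply: eq_bigr => i _; rewrite frobeniusD frobeniusZ mulrDr scalerAr.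
Qed.

HB.instance Definition _ s (w : 'I_s -> L) :=
  GRing.isLinear.Build K L L *:%R (lin_eval w) (lin_eval_is_linear w).

Lemma monic_lin_is_linear s (w : 'I_s -> L) : linear (monic_lin w).
Proof.
by move=> c x y; rewrite /monic_lin frobeniusD frobeniusZ linearP scalerDr addrACA.
Qed.

HB.instance Definition _ s (w : 'I_s -> L) :=
  GRing.isLinear.Build K L L *:%R (monic_lin w) (monic_lin_is_linear w).

Lemma monic_linB s (w w' : 'I_s -> L) x :
  monic_lin w x - monic_lin w' x = lin_eval (fun i => w i - w' i) x.
Proof.
rewrite /monic_lin /lin_eval opprD addrACA subrr add0r -sumrB.
by apply: eq_bigr => i _; rewrite mulrBl.
Qed.

Lemma horner_lin_poly s (w : 'I_s -> L) x : (lin_poly w).[x] = lin_eval w x.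
Proof.
by rewrite /lin_poly horner_sum; apply: eq_bigr => i _; rewrite hornerZ hornerXn.
Qed.

Lemma coef_lin_poly s (w : 'I_s -> L) (i : 'I_s) : (lin_poly w)`_(q ^ i) = w i.
Proof.
rewrite /lin_poly coef_sum (bigD1 i) //= coefZ coefXn eqxx mulr1 big1 ?addr0 //.
move=> j ji; rewrite coefZ coefXn eqn_exp2l ?finNzRing_gt1 //.
by rewrite eq_sym (_ : (j == i :> nat) = false) ?mulr0 //; apply: negbTE.
Qed.

Lemma size_lin_poly s (w : 'I_s -> L) : (size (lin_poly w) <= q ^ s)%N.
Proof.
rewrite /lin_poly; elim/big_ind: _ => [|p1 p2 h1 h2|i _].
- by rewrite size_poly0.
- by rewrite (leq_trans (size_polyD _ _)) // geq_max h1 h2.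
rewrite (leq_trans (size_scale_leq _ _)) // size_polyXn.
by rewrite ltn_exp2l ?finNzRing_gt1.
Qed.

Lemma dim_roots_lt_size (W : {vspace L}) (p : {poly L}) :
  p != 0 -> {in W, forall x, root p x} -> (q ^ \dim W < size p)%N.
Proof.
move=> p0 rootW; set b := vbasis W.
pose comb (c : {ffun 'I_(\dim W) -> K}) := \sum_i c i *: tnth b i.
have comb_inj : injective comb.
  move=> c1 c2 /eqP; rewrite -subr_eq0 -sumrB => /eqP c12.
  apply/ffunP => i; apply/eqP; rewrite -subr_eq0; apply/eqP; move: i.
  have /freeP := basis_free (vbasisP W); apply; rewrite -[RHS]c12.
  by apply: eq_bigr => i _; rewrite (tnth_nth 0) scalerBl.
have -> : (q ^ \dim W)%N = size [seq comb c | c <- enum {: {ffun 'I_(\dim W) -> K}}].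
  by rewrite size_map -cardE card_ffun card_ord.
apply: max_poly_roots => //; last by rewrite map_inj_uniq // enum_uniq.
apply/allP => _ /mapP [c _ ->]; apply: rootW; apply: memv_suml => i _.
by rewrite memvZ // vbasis_mem ?mem_tnth.
Qed.

Lemma lin_eval_coef_eq0 s (w : 'I_s -> L) :
  (s <= \dim (lker (linfun (lin_eval w))))%N -> forall i, w i = 0.
Proof.
move=> ker_ge i; rewrite -coef_lin_poly.
suff -> : lin_poly w = 0 by rewrite coef0.
apply/eqP; apply: contraTT ker_ge => /dim_roots_lt_size lt_size.
have {}lt_size : (q ^ \dim (lker (linfun (lin_eval w))) < q ^ s)%N.
  apply/(leq_trans _ (size_lin_poly w))/lt_size => x.
  by rewrite memv_ker lfunE rootE horner_lin_poly.
by rewrite -ltnNge -(ltn_exp2l _ _ (finNzRing_gt1 K)).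
Qed.

Lemma dim_lker_monic_lin s (w : 'I_s -> L) :
  (\dim (lker (linfun (monic_lin w))) <= s)%N.
Proof.
have size_p : size ('X^(q ^ s) + lin_poly w) = (q ^ s).+1.
  by rewrite size_polyDl size_polyXn // ltnS size_lin_poly.
have p0 : 'X^(q ^ s) + lin_poly w != 0 by rewrite -size_poly_eq0 size_p.
rewrite -(leq_exp2l _ _ (finNzRing_gt1 K)) -ltnS -size_p.
apply: dim_roots_lt_size p0 _ => x.
by rewrite memv_ker lfunE rootE hornerD hornerXn horner_lin_poly.
Qed.

End Linearized.

Section Moore.

Variables (K : finFieldType) (L : fieldExtType K).
Local Notation q := #|K|.

Definition moore_coef s (b : 'I_s -> L) (j : nat) : L :=
  (-1) ^+ (s + j) * \det (Rdel j b) / \det (moore s b).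

Lemma det_moore_neq0 s (b : 'I_s -> L) :
  free [seq b i | i : 'I_s] -> \det (moore s b) != 0.
Proof.
move=> free_b; apply/negP => /det0P [v /negP v0 vM]; apply: v0.
apply/eqP/rowP => i; rewrite mxE; move: i.
apply: lin_eval_coef_eq0; apply: dim_lker_ge_free free_b _ => l.
have := congr1 (fun M : 'M[L]_(1, s) => M 0 l) vM; rewrite !mxE lfunE => <-.
by apply: eq_bigr => j _; rewrite mxE.
Qed.

Lemma Rdel_moore s (b : 'I_s -> L) : Rdel s b = moore s b.
Proof. by apply/matrixP => i l; rewrite !mxE /bump leqNgt ltn_ord. Qed.

(* The Moore matrix of [b_1, ..., b_s, b_l] is singular; expand its
   determinant along the [b_l] entries. *)
Lemma moore_laplace s (b : 'I_s -> L) (l : 'I_s) :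
  \sum_(j < s.+1) (-1) ^+ (s + j) * \det (Rdel j b) * b l ^+ (q ^ j) = 0.
Proof.
pose A := \matrix_(i < s.+1, j < s.+1)
  (if unlift ord_max i is Some i' then b i' else b l) ^+ (q ^ j).
have A0 : \det A = 0.
  apply: (@determinant_alternate _ _ A (lift ord_max l) ord_max).
    by rewrite eq_sym neq_lift.
  by move=> j; rewrite !mxE liftK unlift_none.
rewrite -[RHS]A0 (expand_det_row A ord_max); apply: eq_bigr => j _; rewrite /cofactor.
have -> : row' ord_max (col' j A) = (Rdel j b)^T.
  by apply/matrixP => i i'; rewrite !mxE liftK.
by rewrite det_tr !mxE unlift_none mulrC.
Qed.

Lemma monic_lin_moore_coef s (b : 'I_s -> L) :
  free [seq b i | i : 'I_s] -> forall l, monic_lin (fun j : 'I_s => moore_coef b j) (b l) = 0.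
Proof.
move=> /det_moore_neq0 M0 l; apply: (mulIf M0); rewrite mul0r -(moore_laplace b l).
rewrite big_ord_recr /= Rdel_moore addnn -signr_odd odd_double mul1r addrC.
rewrite /monic_lin /lin_eval mulrDl mulr_suml mulrC; congr (_ + _).
by apply: eq_bigr => j _; rewrite /moore_coef mulrAC divfK // mulrC.
Qed.

Lemma moore_coef_rev s (b : 'I_s -> L) j : (j < s)%N ->
  moore_coef b (s - j.+1) = (-1) ^+ j.+1 * (\det (Rdel (s - j.+1) b) / \det (moore s b)).
Proof.
move=> lt_js; rewrite /moore_coef -mulrA; congr (_ * _).
by rewrite -signr_odd -[RHS]signr_odd oddD oddB // addbA addbb.
Qed.

Lemma monic_lin_rootsP s (w b : 'I_s -> L) :
  free [seq b i | i : 'I_s] ->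
  (forall l, monic_lin w (b l) = 0) <-> (forall j, w j = moore_coef b j).
Proof.
move=> free_b; split=> [w_b j | w_m l].
  apply/eqP; rewrite -subr_eq0; apply/eqP; move: j.
  apply: lin_eval_coef_eq0; apply: dim_lker_ge_free (free_b) _ => l.
  by rewrite lfunE /= -monic_linB w_b monic_lin_moore_coef ?subrr.
rewrite -(monic_lin_moore_coef free_b l); congr (_ + _).
by apply: eq_bigr => j _; rewrite w_m.
Qed.

End Moore.

Section MonicRank.

Variables (K : finFieldType) (L : fieldExtType K).
Variables (n s : nat) (w : 'I_s -> L) (g : 'I_n -> L).
Hypothesis free_g : free [seq g i | i : 'I_n].

Local Notation V := <<[seq g i | i : 'I_n]>>%VS.
Local Notation W := (V :&: lker (linfun (monic_lin w)))%VS.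

Lemma rkv_monic_lin : (rkv (fun i => monic_lin w (g i)) + \dim W = n)%N.
Proof.
apply: etrans (rkv_lfun_ker _ free_g); congr (_ + _).
by apply: eq_rkv => i; rewrite lfunE.
Qed.

Lemma dim_monic_lin_cap : (\dim W <= s)%N.
Proof. exact: leq_trans (dimvS (capvSr _ _)) (dim_lker_monic_lin w). Qed.

Lemma rkv_monic_lin_ge : (n - s <= rkv (fun i => monic_lin w (g i)))%N.
Proof. by have := rkv_monic_lin; have := dim_monic_lin_cap; lia. Qed.

Lemma rkv_monic_lin_eqP : (s <= n)%N ->
  rkv (fun i => monic_lin w (g i)) = (n - s)%N <->
  exists b : 'I_s -> L, [/\ free [seq b i | i : 'I_s],
    forall i, b i \in V & forall i, monic_lin w (b i) = 0].
Proof.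
move=> le_sn; have := rkv_monic_lin; have := dim_monic_lin_cap.
split=> [rk_eq | [b [free_b bV wb0]]].
  have dimW : \dim W = s by lia.
  have := vbasisP W; move: (vbasis W); rewrite dimW => X basisX.
  have X_W i : tnth X i \in W by apply: (basis_mem basisX); apply: mem_tnth.
  exists (tnth X); split=> [|i|i].
  - by rewrite /image_mem map_tnth_enum; apply: basis_free basisX.
  - by have /memv_capP[] := X_W i.
  - by have /memv_capP[_] := X_W i; rewrite memv_ker lfunE => /eqP.
have : (size [seq b i | i : 'I_s] <= \dim W)%N.
  apply: free_size_leq_dim => // _ /imageP [i _ ->].
  by rewrite memv_cap bV memv_ker lfunE /= wb0.
rewrite size_image card_ord; lia.
Qed.

End MonicRank.

Section FpolyCoefficients.

Variables (K : finFieldType) (L : fieldExtType K) (k d : nat) (a : 'I_d -> L).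
Local Notation q := #|K|.

(* The coefficients of [x^{q^i}], [i < k + d], in [fpoly a c]; index [k + j]
   carries [(-1)^(d-j) a_{d-j}], with [a] numbered from 1 as in the paper. *)
Definition fpoly_low (c : 'I_k -> L) : 'I_(k + d) -> L :=
  fun i => match split i with
           | inl j => c j
           | inr j => (-1) ^+ (d - j) * a (rev_ord j)
           end.

Lemma fpoly_subE (c v : 'I_k -> L) x :
  fpoly a c x - \sum_(j < k) v j * x ^+ (q ^ j)
  = monic_lin (fpoly_low (fun j => c j - v j)) x.
Proof.
rewrite /fpoly /monic_lin /lin_eval big_split_ord /=.
have -> : \sum_(i < k) fpoly_low (fun j => c j - v j) (lshift d i) * x ^+ (q ^ i)
          = \sum_(i < k) c i * x ^+ (q ^ i) - \sum_(i < k) v i * x ^+ (q ^ i).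
  by rewrite -sumrB; apply: eq_bigr => j _; rewrite /fpoly_low (unsplitK (inl j)) mulrBl.
have -> : \sum_(i < d) fpoly_low (fun j => c j - v j) (rshift k i) * x ^+ (q ^ (k + i))
          = \sum_(j < d) (-1) ^+ j.+1 * a j * x ^+ (q ^ (k + d - j.+1)).
  rewrite (reindex_inj rev_ord_inj); apply: eq_bigr => j _.
  rewrite /fpoly_low (unsplitK (inr (rev_ord j))) rev_ordK /=.
  have lt_jd := ltn_ord j.
  have -> : (d - (d - j.+1) = j.+1)%N by lia.
  by have -> : (k + (d - j.+1) = k + d - j.+1)%N by lia.
by rewrite -!addrA; congr (_ + _); rewrite addrC -addrA.
Qed.

Lemma fpoly_low_mooreP (b : 'I_(k + d) -> L) (c : 'I_k -> L) :
  (forall i, fpoly_low c i = moore_coef b i) <->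
  (forall j, c j = moore_coef b j) /\
  (forall i : 'I_d, a i = \det (Rdel (k + d - i.+1) b) / \det (moore (k + d) b)).
Proof.
have rev_shift (j : 'I_d) : [/\ d - j = (rev_ord j).+1 & k + j = k + d - (rev_ord j).+1]%N.
  by have := ltn_ord j; split; rewrite /=; lia.
split=> [low_eq | [c_eq a_eq] i].
  split=> [j | i]; first by have := low_eq (lshift d j); rewrite /fpoly_low (unsplitK (inl j)).
  have := low_eq (rshift k (rev_ord i)); rewrite /fpoly_low (unsplitK (inr _)) /=.
  have [-> ->] := rev_shift (rev_ord i); rewrite rev_ordK.
  by rewrite moore_coef_rev ?ltn_addl // => /(can_inj (signrMK _)).
rewrite /fpoly_low; case: splitP => j ->; first exact: c_eq.
have [-> ->] := rev_shift j.
by rewrite a_eq moore_coef_rev ?ltn_addl.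
Qed.

End FpolyCoefficients.

Theorem mainTheorem8 (K : finFieldType) (L : fieldExtType K) (n k d : nat)
  (g : 'I_n -> L) (a : 'I_d -> L) (c : 'I_k -> L) :
  (1 <= k)%N -> (1 <= d)%N -> (k + d < n)%N -> (n <= \dim {:L})%N ->
  free [seq g i | i : 'I_n] ->
  (dR_code_is (fun i => fpoly a c (g i)) (gabidulin g k) (n - (k + d))
   <->
   exists b : 'I_(k + d) -> L,
     [/\ free [seq b i | i : 'I_(k + d)],
         (forall i, b i \in <<[seq g j | j : 'I_n]>>%VS) &
         (forall i : 'I_d,
            a i = \det (Rdel (k + d - i.+1) b) / \det (moore (k + d) b))]).
Proof.
move=> _ _ /ltnW le_sn _ free_g.
have dR_codeword c0 v : (forall i, c0 i = \sum_(j < k) v j * g i ^+ (#|K| ^ j)%N) ->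
    dR (fun i => fpoly a c (g i)) c0
    = rkv (fun i => monic_lin (fpoly_low a (fun j => c j - v j)) (g i)).
  by move=> c0E; apply: eq_rkv => i; rewrite /= c0E fpoly_subE.
split=> [[[c0 [v /dR_codeword ->] rk_eq] _] | [b [free_b bV a_eq]]].
  have [b [free_b bV b_roots]] := (rkv_monic_lin_eqP _ free_g le_sn).1 rk_eq.
  exists b; split=> //.
  by have /fpoly_low_mooreP[] := (monic_lin_rootsP _ free_b).1 b_roots.
pose v j := c j - moore_coef b j.
have low_eq : forall i, fpoly_low a (fun j => c j - v j) i = moore_coef b i.
  by apply/fpoly_low_mooreP; split=> // j; rewrite /v opprB addrC subrK.
split=> [|c0 [v' /dR_codeword ->]]; last exact: rkv_monic_lin_ge.
exists (fun i => \sum_(j < k) v j * g i ^+ (#|K| ^ j)%N); first by exists v.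
rewrite (dR_codeword _ v) //; apply/(rkv_monic_lin_eqP _ free_g le_sn).
by exists b; split=> //; apply/(monic_lin_rootsP _ free_b).
Qed.
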